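(* Let $\alpha_i,\beta_i,\gamma_i,\delta_i\in(0,\pi)$, $i=1,\dots,4$. Replace, for all $i=1,\dots,4$, the numbers $\alpha_i,\beta_i,\gamma_i,\delta_i$ by $\pi-\alpha_i,\pi-\beta_i,\pi-\gamma_i,\pi-\delta_i$. This replacement preserves the values $M_i,r_i,s_i,f_i$ (whenever defined), and preserves each of the following conditions: (E) $\alpha_i\pm\beta_i\pm\gamma_i\pm\delta_i\not\equiv0\pmod{2\pi}$ for all sign choices; (C1) $M_1=M_2=M_3=M_4$; (C2) $r_1=r_2$, $s_1=s_4$, $r_3=r_4$, $s_2=s_3$; (C3) $t_1+e_1t_2+e_2t_3+e_3t_4\in\Lambda$ for some $e_1,e_2,e_3\in\{\pm1\}$.
   Context: $\sigma_i=(\alpha_i+\beta_i+\gamma_i+\delta_i)/2$, $\overline{\alpha}_i=\sigma_i-\alpha_i$, etc.; $a_i=\sin\alpha_i/\sin\overline{\alpha}_i$, $b_i=\sin\beta_i/\sin\overline{\beta}_i$, $c_i=\sin\gamma_i/\sin\overline{\gamma}_i$, $d_i=\sin\delta_i/\sin\overline{\delta}_i$, $M_i=a_ib_ic_id_i$, $r_i=a_id_i$, $s_i=c_id_i$, $f_i=a_ic_i$. When $M:=M_1=\dots=M_4$: $k=\sqrt{1-M}$ if $M<1$, $k=\sqrt{1-M^{-1}}$ if $M>1$; $k'=\sqrt{1-k^2}$; $K=\int_0^1\frac{dx}{\sqrt{(1-x^2)(1-k^2x^2)}}$, $K'=\int_0^1\frac{dx}{\sqrt{(1-x^2)(1-k'^2x^2)}}$;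 $\Lambda=\{4Km+2\mathbf{i}K'n\}_{m,n\in\mathbb{Z}}$ if $M<1$, $\Lambda=\{4Km+(2K+2\mathbf{i}K')n\}_{m,n\in\mathbb{Z}}$ if $M>1$; $p_i=\sqrt{r_i-1}$, $q_i=\sqrt{s_i-1}$, each in $\mathbb{R}_{>0}\cup\mathbf{i}\mathbb{R}_{>0}$; $t_i$ is the complex number with $\operatorname{dn}(t_i,k)=\sqrt{f_i}$ if $M<1$, $=1/\sqrt{f_i}$ if $M>1$, on the open segment: if $\sigma_i<\pi$: $(0,\mathbf{i}K')$ when $p_iq_i>0$, $(K,K+\mathbf{i}K')$ when $p_iq_i\in\mathbf{i}\mathbb{R}_{>0}$, $(2K,2K+\mathbf{i}K')$ when $p_iq_i<0$; if $\sigma_i>\pi$: respectively $(2K,2K+\mathbf{i}K')$, $(3K,3K+\mathbf{i}K')$, $(0,\mathbf{i}K')$. *)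

From Stdlib Require Import Reals ZArith.
From Coquelicot Require Import Coquelicot.
Open Scope R_scope.

Record quad := mkQuad { qa : R; qb : R; qc : R; qd : R }.

Definition angles_ok (Q : quad) : Prop :=
  0 < qa Q < PI /\ 0 < qb Q < PI /\ 0 < qc Q < PI /\ 0 < qd Q < PI.

Definition flipQ (Q : quad) : quad :=
  mkQuad (PI - qa Q) (PI - qb Q) (PI - qc Q) (PI - qd Q).

Definition sigma (Q : quad) : R := (qa Q + qb Q + qc Q + qd Q) / 2.

Definition coef (x s : R) : R := sin x / sin (s - x).
Definition ca (Q : quad) := coef (qa Q) (sigma Q).
Definition cb (Q : quad) := coef (qb Q) (sigma Q).
Definition cc (Q : quad) := coef (qc Q) (sigma Q).
Definition cd (Q : quad) := coef (qd Q) (sigma Q).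

Definition Mq (Q : quad) := ca Q * cb Q * cc Q * cd Q.
Definition rq (Q : quad) := ca Q * cd Q.
Definition sq (Q : quad) := cc Q * cd Q.
Definition fq (Q : quad) := ca Q * cc Q.

Definition values_preserved (Q : quad) : Prop :=
  Mq (flipQ Q) = Mq Q /\ rq (flipQ Q) = rq Q /\
  sq (flipQ Q) = sq Q /\ fq (flipQ Q) = fq Q.

Definition is_sign (e : R) : Prop := e = 1 \/ e = -1.

Definition condE_one (Q : quad) : Prop :=
  forall s1 s2 s3 : R, is_sign s1 -> is_sign s2 -> is_sign s3 ->
  forall m : Z, qa Q + s1 * qb Q + s2 * qc Q + s3 * qd Q <> 2 * PI * IZR m.

Definition condE (Q1 Q2 Q3 Q4 : quad) : Prop :=
  condE_one Q1 /\ condE_one Q2 /\ condE_one Q3 /\ condE_one Q4.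

Definition condC1 (Q1 Q2 Q3 Q4 : quad) : Prop :=
  Mq Q1 = Mq Q2 /\ Mq Q2 = Mq Q3 /\ Mq Q3 = Mq Q4.

Definition condC2 (Q1 Q2 Q3 Q4 : quad) : Prop :=
  rq Q1 = rq Q2 /\ sq Q1 = sq Q4 /\ rq Q3 = rq Q4 /\ sq Q2 = sq Q3.

(* square root of a real number, taken in R_{>0} \cup i R_{>0} (0 for x = 0) *)
Definition csqrtR (x : R) : C :=
  if Rlt_dec 0 x then (sqrt x, 0) else (0, sqrt (- x)).

Definition kmod (M : R) : R := if Rlt_dec M 1 then sqrt (1 - M) else sqrt (1 - / M).

Definition is_ellK (k K : R) : Prop :=
  is_RInt_gen (fun x => / sqrt ((1 - x ^ 2) * (1 - k ^ 2 * x ^ 2)))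
    (at_point 0) (at_left 1) K.

(* Jacobi theta functions theta_3, theta_4 (DLMF 20.2.3-4) with real nome q,
   at the complex point z = x + i y, using
   cos (2n z) = cos (2nx) cosh (2ny) - i sin (2nx) sinh (2ny). *)
Definition theta3 (q : R) (z : C) : C :=
  (1 + 2 * Series (fun n => q ^ ((S n) * (S n)) * cos (2 * INR (S n) * fst z)
                               * cosh (2 * INR (S n) * snd z)),
   - (2 * Series (fun n => q ^ ((S n) * (S n)) * sin (2 * INR (S n) * fst z)
                               * sinh (2 * INR (S n) * snd z)))).

Definition theta4 (q : R) (z : C) : C :=
  (1 + 2 * Series (fun n => (-1) ^ (S n) * q ^ ((S n) * (S n))
                               * cos (2 * INR (S n) * fst z)
                               * cosh (2 * INR (S n) * snd z)),
   - (2 * Series (fun n => (-1) ^ (S n) * q ^ ((S n) * (S n))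
                               * sin (2 * INR (S n) * fst z)
                               * sinh (2 * INR (S n) * snd z)))).

(* Jacobi dn(u, k) for complex u, via theta functions (DLMF 22.2.6):
   dn(u,k) = sqrt(k') theta3(zeta)/theta4(zeta), zeta = pi u / (2K),
   nome q = exp(-pi K'/K), where K = K(k), K' = K(k'). *)
Definition jdn (k K K' : R) (u : C) : C :=
  let k' := sqrt (1 - k ^ 2) in
  let q := exp (- PI * K' / K) in
  let zeta := Cmult (RtoC (PI / (2 * K))) u in
  Cmult (RtoC (sqrt k')) (Cdiv (theta3 q zeta) (theta4 q zeta)).

(* the real part a of the open vertical segment (a, a + i K') where t_i lives *)
Definition seg_base (Q : quad) (K a : R) : Prop :=
  let pq := Cmult (csqrtR (rq Q - 1)) (csqrtR (sq Q - 1)) in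
  let pos := Im pq = 0 /\ 0 < Re pq in
  let imag := Re pq = 0 /\ 0 < Im pq in
  let neg := Im pq = 0 /\ Re pq < 0 in
  (sigma Q < PI /\
     ((pos /\ a = 0) \/ (imag /\ a = K) \/ (neg /\ a = 2 * K))) \/
  (PI < sigma Q /\
     ((pos /\ a = 2 * K) \/ (imag /\ a = 3 * K) \/ (neg /\ a = 0))).

Definition t_prop (M K K' : R) (Q : quad) (t : C) : Prop :=
  (exists a, seg_base Q K a /\ Re t = a) /\ 0 < Im t < K' /\
  jdn (kmod M) K K' t =
    (if Rlt_dec M 1 then csqrtR (fq Q) else Cinv (csqrtR (fq Q))).

Definition is_t (M K K' : R) (Q : quad) (t : C) : Prop :=
  t_prop M K K' Q t /\ forall t', t_prop M K K' Q t' -> t' = t.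

Definition in_Lambda (M K K' : R) (z : C) : Prop :=
  exists m n : Z,
    if Rlt_dec M 1 then z = (4 * K * IZR m, 2 * K' * IZR n)
    else z = (4 * K * IZR m + 2 * K * IZR n, 2 * K' * IZR n).

Definition condC3 (Q1 Q2 Q3 Q4 : quad) : Prop :=
  let M := Mq Q1 in
  0 < M /\ M <> 1 /\
  let k := kmod M in
  let k' := sqrt (1 - k ^ 2) in
  exists K K' : R, is_ellK k K /\ is_ellK k' K' /\
  exists t1 t2 t3 t4 : C,
    is_t M K K' Q1 t1 /\ is_t M K K' Q2 t2 /\
    is_t M K K' Q3 t3 /\ is_t M K K' Q4 t4 /\
  exists e1 e2 e3 : R, is_sign e1 /\ is_sign e2 /\ is_sign e3 /\
    in_Lambda M K K'
      (Cplus (Cplus (Cplus t1 (Cmult (RtoC e1) t2)) (Cmult (RtoC e2) t3))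
             (Cmult (RtoC e3) t4)).

(** The replacement x |-> PI - x sends sigma to 2 PI - sigma, and
    sin (PI - x) = sin x, sin ((2 PI - sigma) - (PI - x)) = sin (sigma - x);
    so every coefficient a, b, c, d is unchanged, hence so are M, r, s, f and
    the conditions (C1), (C2).  For (E), the flipped signed sum equals
    PI (1 + s1 + s2 + s3) minus the original one, and 1 + s1 + s2 + s3 is even.
    For (C3), the flip exchanges sigma < PI and sigma > PI, which moves the
    segment carrying each t_i by 2K or -2K; dn is 2K-periodic in the real
    direction (theta_3, theta_4 are PI-periodic), so the shifted points are the
    new t_i, and the total shift of t1 + e1 t2 + e2 t3 + e3 t4 is 2K times a sum
    of four signs, i.e. a multiple of 4K, which lies in Lambda. *)

From Pilot Require Import Defs.
From Stdlib Require Import Reals Lra Lia ZArith.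
From Coquelicot Require Import Coquelicot.
Open Scope R_scope.

Lemma flipQ_involutive Q : flipQ (flipQ Q) = Q.
Proof. destruct Q; unfold flipQ; simpl; f_equal; ring. Qed.

Lemma flipQ_iff (P : quad -> quad -> quad -> quad -> Prop) :
  (forall Q1 Q2 Q3 Q4, P Q1 Q2 Q3 Q4 -> P (flipQ Q1) (flipQ Q2) (flipQ Q3) (flipQ Q4)) ->
  forall Q1 Q2 Q3 Q4, P Q1 Q2 Q3 Q4 <-> P (flipQ Q1) (flipQ Q2) (flipQ Q3) (flipQ Q4).
Proof.
  intros HP Q1 Q2 Q3 Q4. split; [apply HP |].
  intros H. rewrite <- (flipQ_involutive Q1), <- (flipQ_involutive Q2),
    <- (flipQ_involutive Q3), <- (flipQ_involutive Q4).
  apply HP, H.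
Qed.

Lemma sigma_flipQ Q : Defs.sigma (flipQ Q) = 2 * PI - Defs.sigma Q.
Proof. destruct Q; unfold Defs.sigma, flipQ; simpl; field. Qed.

Lemma coef_flip x s : coef (PI - x) (2 * PI - s) = coef x s.
Proof.
  unfold coef. rewrite sin_PI_x.
  replace (2 * PI - s - (PI - x)) with (PI - (s - x)) by ring.
  rewrite sin_PI_x. reflexivity.
Qed.

Lemma ca_flipQ Q : ca (flipQ Q) = ca Q.
Proof. unfold ca. rewrite sigma_flipQ. apply coef_flip. Qed.

Lemma cb_flipQ Q : cb (flipQ Q) = cb Q.
Proof. unfold cb. rewrite sigma_flipQ. apply coef_flip. Qed.

Lemma cc_flipQ Q : cc (flipQ Q) = cc Q.
Proof. unfold cc. rewrite sigma_flipQ. apply coef_flip. Qed.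

Lemma cd_flipQ Q : cd (flipQ Q) = cd Q.
Proof. unfold cd. rewrite sigma_flipQ. apply coef_flip. Qed.

Lemma Mq_flipQ Q : Mq (flipQ Q) = Mq Q.
Proof. unfold Mq. rewrite ca_flipQ, cb_flipQ, cc_flipQ, cd_flipQ. reflexivity. Qed.

Lemma rq_flipQ Q : rq (flipQ Q) = rq Q.
Proof. unfold rq. rewrite ca_flipQ, cd_flipQ. reflexivity. Qed.

Lemma sq_flipQ Q : sq (flipQ Q) = sq Q.
Proof. unfold sq. rewrite cc_flipQ, cd_flipQ. reflexivity. Qed.

Lemma fq_flipQ Q : fq (flipQ Q) = fq Q.
Proof. unfold fq. rewrite ca_flipQ, cc_flipQ. reflexivity. Qed.

Lemma values_preserved_all Q : values_preserved Q.
Proof.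
  unfold values_preserved. rewrite Mq_flipQ, rq_flipQ, sq_flipQ, fq_flipQ. tauto.
Qed.

Lemma is_sign_IZR e : is_sign e -> exists z : Z, e = IZR z.
Proof. intros [-> | ->]; [exists 1%Z | exists (-1)%Z]; reflexivity. Qed.

Lemma is_sign_mul a b : is_sign a -> is_sign b -> is_sign (a * b).
Proof. intros [-> | ->] [-> | ->]; unfold is_sign; [left | right | right | left]; ring. Qed.

Lemma sum_four_signs_even a b c d :
  is_sign a -> is_sign b -> is_sign c -> is_sign d ->
  exists j : Z, a + b + c + d = 2 * IZR j.
Proof.
  intros [-> | ->] [-> | ->] [-> | ->] [-> | ->];
    [exists 2%Z | exists 1%Z | exists 1%Z | exists 0%Z
    |exists 1%Z | exists 0%Z | exists 0%Z | exists (-1)%Z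
    |exists 1%Z | exists 0%Z | exists 0%Z | exists (-1)%Z
    |exists 0%Z | exists (-1)%Z | exists (-1)%Z | exists (-2)%Z]; simpl; ring.
Qed.

Lemma condE_one_flipQ Q : condE_one Q -> condE_one (flipQ Q).
Proof.
  intros H s1 s2 s3 h1 h2 h3 m Heq. simpl in Heq.
  destruct (sum_four_signs_even 1 s1 s2 s3 (or_introl eq_refl) h1 h2 h3) as [j Hj].
  apply (H s1 s2 s3 h1 h2 h3 (j - m)%Z).
  rewrite minus_IZR.
  replace (qa Q + s1 * qb Q + s2 * qc Q + s3 * qd Q) with
    (PI * (1 + s1 + s2 + s3) -
     (PI - qa Q + s1 * (PI - qb Q) + s2 * (PI - qc Q) + s3 * (PI - qd Q))) by ring.
  rewrite Heq, Hj. ring.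
Qed.

Lemma condE_flipQ Q1 Q2 Q3 Q4 :
  condE Q1 Q2 Q3 Q4 -> condE (flipQ Q1) (flipQ Q2) (flipQ Q3) (flipQ Q4).
Proof. intros (H1 & H2 & H3 & H4). repeat split; apply condE_one_flipQ; assumption. Qed.

Lemma cos_period_Z x m : cos (x + 2 * IZR m * PI) = cos x.
Proof.
  destruct (Z_le_gt_dec 0 m) as [Hm | Hm].
  - rewrite <- (Z2Nat.id m Hm), <- INR_IZR_INZ. apply cos_period.
  - rewrite <- (cos_period _ (Z.to_nat (- m))), INR_IZR_INZ, Z2Nat.id by lia.
    rewrite opp_IZR. f_equal. ring.
Qed.

Lemma sin_period_Z x m : sin (x + 2 * IZR m * PI) = sin x.
Proof.
  destruct (Z_le_gt_dec 0 m) as [Hm | Hm].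
  - rewrite <- (Z2Nat.id m Hm), <- INR_IZR_INZ. apply sin_period.
  - rewrite <- (sin_period _ (Z.to_nat (- m))), INR_IZR_INZ, Z2Nat.id by lia.
    rewrite opp_IZR. f_equal. ring.
Qed.

Lemma shift_PI_multiple n x m :
  2 * INR n * (x + PI * IZR m) = 2 * INR n * x + 2 * IZR (Z.of_nat n * m) * PI.
Proof. rewrite mult_IZR, <- INR_IZR_INZ. ring. Qed.

Lemma theta3_add_PI_multiple q x y m :
  theta3 q (x + PI * IZR m, y) = theta3 q (x, y).
Proof.
  unfold theta3; simpl fst; simpl snd. f_equal; do 2 f_equal;
    apply Series_ext; intros n; rewrite shift_PI_multiple.
  - rewrite cos_period_Z. reflexivity.
  - rewrite sin_period_Z. reflexivity.
Qed.

Lemma theta4_add_PI_multiple q x y m :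
  theta4 q (x + PI * IZR m, y) = theta4 q (x, y).
Proof.
  unfold theta4; simpl fst; simpl snd. f_equal; do 2 f_equal;
    apply Series_ext; intros n; rewrite shift_PI_multiple.
  - rewrite cos_period_Z. reflexivity.
  - rewrite sin_period_Z. reflexivity.
Qed.

Lemma jdn_add_2K_multiple k K K' t m :
  jdn k K K' (Cplus t (RtoC (2 * K * IZR m))) = jdn k K K' t.
Proof.
  unfold jdn. destruct t as [x y].
  set (zeta := Cmult (RtoC (PI / (2 * K))) (x, y)).
  (* [PI / (2 * 0) = 0] in Rocq, so for [K = 0] the shift of zeta vanishes. *)
  assert (Hzeta : exists m', Cmult (RtoC (PI / (2 * K))) (Cplus (x, y) (RtoC (2 * K * IZR m)))
                             = (fst zeta + PI * IZR m', snd zeta)).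
  { destruct (Req_dec K 0) as [-> | HK].
    - exists 0%Z. apply injective_projections; simpl; ring.
    - exists m. apply injective_projections; simpl; field; exact HK. }
  destruct Hzeta as [m' ->].
  rewrite theta3_add_PI_multiple, theta4_add_PI_multiple.
  reflexivity.
Qed.

Lemma seg_base_flipQ Q K a : seg_base Q K a ->
  exists e, is_sign e /\ seg_base (flipQ Q) K (a + 2 * K * e).
Proof.
  unfold seg_base. rewrite rq_flipQ, sq_flipQ, sigma_flipQ.
  intros [[Hs [[Hp Ha] | [[Hp Ha] | [Hp Ha]]]] | [Hs [[Hp Ha] | [[Hp Ha] | [Hp Ha]]]]].
  - exists 1. split; [left; reflexivity |]. right. split; [lra |]. left. split; [exact Hp | lra].
  - exists 1. split; [left; reflexivity |]. right. split; [lra |]. right; left. split; [exact Hp | lra].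
  - exists (-1). split; [right; reflexivity |]. right. split; [lra |]. right; right. split; [exact Hp | lra].
  - exists (-1). split; [right; reflexivity |]. left. split; [lra |]. left. split; [exact Hp | lra].
  - exists (-1). split; [right; reflexivity |]. left. split; [lra |]. right; left. split; [exact Hp | lra].
  - exists 1. split; [left; reflexivity |]. left. split; [lra |]. right; right. split; [exact Hp | lra].
Qed.

Lemma seg_base_unique Q K a1 a2 : seg_base Q K a1 -> seg_base Q K a2 -> a1 = a2.
Proof. unfold seg_base. intros H1 H2. decompose [and or] H1; decompose [and or] H2; lra. Qed.

Lemma t_prop_flipQ M K K' Q t : t_prop M K K' Q t ->
  exists e, is_sign e /\ t_prop M K K' (flipQ Q) (Cplus t (RtoC (2 * K * e))).
Proof.
  intros [[a [Hs Ha]] [Him Hdn]].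
  destruct (seg_base_flipQ _ _ _ Hs) as [e [He Hs']].
  exists e. split; [exact He |]. destruct t as [x y]; simpl in *.
  split; [| split].
  - exists (a + 2 * K * e). split; [exact Hs' | simpl; lra].
  - simpl. lra.
  - destruct (is_sign_IZR e He) as [z ->].
    rewrite jdn_add_2K_multiple, fq_flipQ. exact Hdn.
Qed.

Lemma is_t_flipQ M K K' Q t : is_t M K K' Q t ->
  exists e, is_sign e /\ is_t M K K' (flipQ Q) (Cplus t (RtoC (2 * K * e))).
Proof.
  intros [Ht Huniq].
  destruct (t_prop_flipQ _ _ _ _ _ Ht) as [e [He Ht']].
  exists e. split; [exact He |]. split; [exact Ht' |].
  intros u Hu.
  destruct (t_prop_flipQ _ _ _ _ _ Hu) as [e' [_ Hu']].
  rewrite flipQ_involutive in Hu'.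
  pose proof (Huniq _ Hu') as Hshift.
  destruct Hu as [[b [Hsb Hb]] _], Ht' as [[a [Hsa Ha]] _].
  pose proof (seg_base_unique _ _ _ _ Hsb Hsa) as Hab.
  destruct t as [x y], u as [x' y']. simpl in *. injection Hshift as Ex Ey.
  apply injective_projections; simpl; lra.
Qed.

Definition signed_sum (t1 t2 t3 t4 : C) (e1 e2 e3 : R) : C :=
  Cplus (Cplus (Cplus t1 (Cmult (RtoC e1) t2)) (Cmult (RtoC e2) t3)) (Cmult (RtoC e3) t4).

Lemma signed_sum_shift t1 t2 t3 t4 e1 e2 e3 c d1 d2 d3 d4 :
  signed_sum (Cplus t1 (RtoC (c * d1))) (Cplus t2 (RtoC (c * d2)))
             (Cplus t3 (RtoC (c * d3))) (Cplus t4 (RtoC (c * d4))) e1 e2 e3 =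
  Cplus (signed_sum t1 t2 t3 t4 e1 e2 e3)
        (RtoC (c * (d1 + e1 * d2 + e2 * d3 + e3 * d4))).
Proof.
  destruct t1, t2, t3, t4. unfold signed_sum.
  apply injective_projections; simpl; ring.
Qed.

Lemma in_Lambda_add_4K_multiple M K K' z j : in_Lambda M K K' z ->
  in_Lambda M K K' (Cplus z (RtoC (4 * K * IZR j))).
Proof.
  intros [m [n H]]. exists (m + j)%Z, n.
  destruct (Rlt_dec M 1); subst z; apply injective_projections; simpl;
    rewrite ?plus_IZR; ring.
Qed.

Lemma in_Lambda_signed_sum_shift M K K' t1 t2 t3 t4 e1 e2 e3 d1 d2 d3 d4 :
  is_sign e1 -> is_sign e2 -> is_sign e3 ->
  is_sign d1 -> is_sign d2 -> is_sign d3 -> is_sign d4 ->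
  in_Lambda M K K' (signed_sum t1 t2 t3 t4 e1 e2 e3) ->
  in_Lambda M K K'
    (signed_sum (Cplus t1 (RtoC (2 * K * d1))) (Cplus t2 (RtoC (2 * K * d2)))
                (Cplus t3 (RtoC (2 * K * d3))) (Cplus t4 (RtoC (2 * K * d4))) e1 e2 e3).
Proof.
  intros he1 he2 he3 hd1 hd2 hd3 hd4 HL.
  destruct (sum_four_signs_even _ _ _ _ hd1 (is_sign_mul _ _ he1 hd2)
              (is_sign_mul _ _ he2 hd3) (is_sign_mul _ _ he3 hd4)) as [j Hj].
  rewrite signed_sum_shift, Hj.
  replace (2 * K * (2 * IZR j)) with (4 * K * IZR j) by ring.
  apply in_Lambda_add_4K_multiple, HL.
Qed.

Lemma condC3_flipQ Q1 Q2 Q3 Q4 :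
  condC3 Q1 Q2 Q3 Q4 -> condC3 (flipQ Q1) (flipQ Q2) (flipQ Q3) (flipQ Q4).
Proof.
  unfold condC3. cbv zeta. rewrite Mq_flipQ.
  intros (HM & HM1 & K & K' & HK & HK' & t1 & t2 & t3 & t4 & H1 & H2 & H3 & H4 &
          e1 & e2 & e3 & he1 & he2 & he3 & HL).
  destruct (is_t_flipQ _ _ _ _ _ H1) as (d1 & hd1 & G1).
  destruct (is_t_flipQ _ _ _ _ _ H2) as (d2 & hd2 & G2).
  destruct (is_t_flipQ _ _ _ _ _ H3) as (d3 & hd3 & G3).
  destruct (is_t_flipQ _ _ _ _ _ H4) as (d4 & hd4 & G4).
  split; [exact HM |]. split; [exact HM1 |].
  exists K, K'. split; [exact HK |]. split; [exact HK' |].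
  exists (Cplus t1 (RtoC (2 * K * d1))), (Cplus t2 (RtoC (2 * K * d2))),
         (Cplus t3 (RtoC (2 * K * d3))), (Cplus t4 (RtoC (2 * K * d4))).
  split; [exact G1 |]. split; [exact G2 |]. split; [exact G3 |]. split; [exact G4 |].
  exists e1, e2, e3. split; [exact he1 |]. split; [exact he2 |]. split; [exact he3 |].
  apply in_Lambda_signed_sum_shift; assumption.
Qed.

Theorem lemma3 (Q1 Q2 Q3 Q4 : quad) :
  angles_ok Q1 -> angles_ok Q2 -> angles_ok Q3 -> angles_ok Q4 ->
  (values_preserved Q1 /\ values_preserved Q2 /\
   values_preserved Q3 /\ values_preserved Q4) /\
  (condE Q1 Q2 Q3 Q4 <-> condE (flipQ Q1) (flipQ Q2) (flipQ Q3) (flipQ Q4)) /\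
  (condC1 Q1 Q2 Q3 Q4 <-> condC1 (flipQ Q1) (flipQ Q2) (flipQ Q3) (flipQ Q4)) /\
  (condC2 Q1 Q2 Q3 Q4 <-> condC2 (flipQ Q1) (flipQ Q2) (flipQ Q3) (flipQ Q4)) /\
  (condC3 Q1 Q2 Q3 Q4 <-> condC3 (flipQ Q1) (flipQ Q2) (flipQ Q3) (flipQ Q4)).
Proof.
  intros _ _ _ _.
  split; [repeat split; apply values_preserved_all |].
  split; [apply flipQ_iff, condE_flipQ |].
  split; [unfold condC1; rewrite !Mq_flipQ; tauto |].
  split; [unfold condC2; rewrite !rq_flipQ, !sq_flipQ; tauto |].
  apply flipQ_iff, condC3_flipQ.
Qed.
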